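(* Let $d\geq 2$ be even and $E,F\subset\mathbb F_q^d$. Then $$|\nu(0)|\leq q^{-1}|E||F|+2q^{d/2}|E|^{1/2}|F|^{1/2}.$$
   Context: $\mathbb F_q$ is a finite field with $q$ elements, of characteristic greater than two. For $m\in\mathbb F_q^d$, $\|m\|=m_1^2+\dots+m_d^2$, and $\nu(0)=|\{(x,y)\in E\times F:\|x-y\|=0\}|$. *)

From HB Require Import structures.
From mathcomp Require Import all_boot all_order all_algebra all_field.
Set Implicit Arguments. Unset Strict Implicit. Unset Printing Implicit Defensive.
Import Order.TTheory GRing.Theory Num.Theory.
Local Open Scope ring_scope.

Definition sqnorm (K : finFieldType) (d : nat) (m : 'rV[K]_d) : K :=
  \sum_(i < d) (m ord0 i) ^+ 2.

Definition nu0 (K : finFieldType) (d : nat) (E F : {set 'rV[K]_d}) : nat :=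
  #|[set p in setX E F | sqnorm (p.1 - p.2) == 0]|.

From HB Require Import structures.
From mathcomp Require Import all_boot all_order all_algebra all_field.
From mathcomp Require Import ring lra.
Set Implicit Arguments. Unset Strict Implicit. Unset Printing Implicit Defensive.
Import Order.TTheory GRing.Theory Num.Theory.
Local Open Scope ring_scope.

(* Fix a nontrivial
   additive character psi : K -> C (built from a coordinate functional of K over
   its prime field and a primitive p-th root of unity).  Orthogonality of psi
   gives the expansion
       q nu(0) = |E||F| + sum_{s <> 0} S(s),
       S(s)    = sum_{x in E, y in F} psi(s ||x - y||).
   Writing ||x - y|| = ||x|| + ||y|| - 2 x.y, each S(s) is a sum over x in E of
   a unimodular factor times a twisted Fourier transform of the indicator of F;
   Cauchy-Schwarz and the Plancherel identity for that transform give
   |S(s)|^2 <= q^d |E||F|.  Hence (q nu(0) - |E||F|)^2 <= (q-1)^2 q^d |E||F|,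
   an integer inequality, which is transferred to an arbitrary real closed
   field; for even d, q^d = (q^(d/2))^2, and dividing by q yields the theorem. *)

Lemma finField_nontrivial_character (K : finFieldType) : exists psi : K -> algC,
  [/\ (forall a b, psi (a + b) = psi a * psi b), (forall a, `|psi a| = 1)
    & exists a, psi a != 1].
Proof.
have [p pr_p pchK] := finPcharP K.
pose V := pPrimeCharType pchK.
pose e := vbasis (fullv : {vspace V}).
have dim_gt0 : (0 < \dim (fullv : {vspace V}))%N.
  rewrite lt0n dimv_eq0; apply/eqP => full0.
  have : (1 : V) \in (fullv : {vspace V}) by rewrite memvf.
  by rewrite full0 memv0 oner_eq0.
pose i0 := Ordinal dim_gt0.
pose f := coord e i0.
have p_gt1 : (1 < #|'F_p|)%N by rewrite card_Fp // prime_gt1.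
have [w w_prim] := C_prim_root_exists (ltnW p_gt1).
exists (fun x => w ^+ f x); split.
- move=> a b; have -> : f (a + b) = f a + f b by exact: raddfD.
  have -> : val (f a + f b) = ((f a + f b)%N %% #|'F_p|)%N.
    by rewrite card_Fp //=; congr modn; apply: Fp_cast.
  by rewrite (prim_expr_mod w_prim) exprD.
- have w1 : `|w| = 1.
    apply/eqP; rewrite -(pexpr_eq1 (ltnW p_gt1)) ?normr_ge0 //.
    by rewrite -normrX (prim_expr_order w_prim) normr1.
  by move=> a; rewrite normrX w1 expr1n.
- exists (e`_i0 : V).
  have -> : f e`_i0 = 1 by rewrite /f coord_free ?eqxx //; exact: basis_free (vbasisP _).
  by rewrite -(expr0 w) (eq_prim_root_expr w_prim) /= mod0n modn_small.
Qed.

(* Cauchy-Schwarz for nonnegative families, via Lagrange's identity. *)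
Lemma sum_mul_sqr_le (R : numDomainType) (I : finType) (P : pred I) (a b : I -> R) :
  (forall i, 0 <= a i) -> (forall i, 0 <= b i) ->
  (\sum_(i | P i) a i * b i) ^+ 2 <=
  (\sum_(i | P i) a i ^+ 2) * (\sum_(i | P i) b i ^+ 2).
Proof.
move=> a_ge0 b_ge0.
have lagrange : \sum_(i | P i) \sum_(j | P j) (a i * b j - a j * b i) ^+ 2 =
  2 * ((\sum_(i | P i) a i ^+ 2) * (\sum_(i | P i) b i ^+ 2)
       - (\sum_(i | P i) a i * b i) ^+ 2).
  have expand i j : (a i * b j - a j * b i) ^+ 2 =
     a i ^+ 2 * b j ^+ 2 + a j ^+ 2 * b i ^+ 2 - 2 * ((a i * b i) * (a j * b j)).
    by ring.
  under eq_bigr do under eq_bigr do rewrite expand.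
  under eq_bigr do rewrite sumrB big_split /=.
  have prod_sum (f g : I -> R) : \sum_(i | P i) \sum_(j | P j) f i * g j =
      (\sum_(i | P i) f i) * (\sum_(i | P i) g i) by rewrite big_distrlr.
  rewrite sumrB big_split /= [X in _ + X - _]exchange_big /=.
  under [X in _ - X]eq_bigr do rewrite -mulr_sumr.
  rewrite -mulr_sumr !prod_sum; ring.
have square_ge0 i j : 0 <= (a i * b j - a j * b i) ^+ 2.
  by rewrite -realEsqr rpredB ?rpredM ?ger0_real.
have : 0 <= \sum_(i | P i) \sum_(j | P j) (a i * b j - a j * b i) ^+ 2.
  by apply: sumr_ge0 => i _; apply: sumr_ge0.
by rewrite lagrange pmulr_rge0 ?ltr0n // subr_ge0.
Qed.

Lemma norm_sum_mul_sqr_le (R : numDomainType) (I : finType) (P : pred I) (u v : I -> R) :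
  `|\sum_(i | P i) u i * v i| ^+ 2 <=
  (\sum_(i | P i) `|u i| ^+ 2) * (\sum_(i | P i) `|v i| ^+ 2).
Proof.
have /= := sum_mul_sqr_le P (fun i => normr_ge0 (u i)) (fun i => normr_ge0 (v i)).
apply: le_trans.
rewrite lerXn2r ?nnegrE ?normr_ge0 //.
  by apply: sumr_ge0 => i _; rewrite mulr_ge0 ?normr_ge0.
have -> : \sum_(i | P i) `|u i| * `|v i| = \sum_(i | P i) `|u i * v i|.
  by apply: eq_bigr => i _; rewrite normrM.
exact: ler_norm_sum.
Qed.

Lemma sum_eq0_of_shift (R : idomainType) (V : finType) (g : V -> R) (h : V -> V) (c : R) :
  injective h -> c != 1 -> (forall x, g (h x) = g x * c) -> \sum_x g x = 0.
Proof.
move=> h_inj c_neq1 g_shift.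
have sum_fixed : \sum_x g x = (\sum_x g x) * c.
  by rewrite {1}(reindex_inj h_inj) mulr_suml; apply: eq_bigr => x _.
move: c_neq1; rewrite -subr_eq0 => /mulIf; apply.
by rewrite mulrBr mulr1 mul0r -sum_fixed subrr.
Qed.

Section DotProduct.
Variables (R : comNzRingType) (d : nat).

Definition dot (x y : 'rV[R]_d) : R := \sum_i x 0 i * y 0 i.

Lemma dotDl (x x' y : 'rV[R]_d) : dot (x + x') y = dot x y + dot x' y.
Proof. by rewrite /dot -big_split; apply: eq_bigr => i _; rewrite mxE mulrDl. Qed.

Lemma dotBr (x y y' : 'rV[R]_d) : dot x (y - y') = dot x y - dot x y'.
Proof. by rewrite /dot -sumrB; apply: eq_bigr => i _; rewrite !mxE mulrBr. Qed.

Lemma dotx0 (x : 'rV[R]_d) : dot x 0 = 0.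
Proof. by rewrite /dot big1 // => i _; rewrite mxE mulr0. Qed.

End DotProduct.

Lemma sqnormB (K : finFieldType) (d : nat) (x y : 'rV[K]_d) :
  sqnorm (x - y) = sqnorm x + sqnorm y - 2 * dot x y.
Proof.
rewrite /sqnorm /dot mulr_sumr -big_split -sumrB /=; apply: eq_bigr => i _.
by rewrite !mxE; ring.
Qed.

Lemma nu0_sum (R : nzSemiRingType) (K : finFieldType) (d : nat) (E F : {set 'rV[K]_d}) :
  (nu0 E F)%:R = \sum_(x in E) \sum_(y in F) ((sqnorm (x - y) == 0)%:R : R).
Proof.
rewrite /nu0 -sumr_const pair_big /= big_mkcond [RHS]big_mkcond /=.
apply: eq_bigr => p _; rewrite !inE.
by case: (p.1 \in E); case: (p.2 \in F); case: (sqnorm _ == 0).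
Qed.

Section AdditiveCharacter.
Variables (K : finFieldType) (psi : K -> algC).
Hypothesis psiD : forall a b, psi (a + b) = psi a * psi b.
Hypothesis psi_unit : forall a, `|psi a| = 1.
Variable a0 : K.
Hypothesis psi_a0 : psi a0 != 1.

Lemma psi_neq0 a : psi a != 0.
Proof. by rewrite -normr_eq0 psi_unit oner_eq0. Qed.

Lemma psi0 : psi 0 = 1.
Proof. by apply: (mulfI (psi_neq0 0)); rewrite -psiD addr0 mulr1. Qed.

(* psi takes unimodular values, so psi(-a) is the conjugate of psi(a). *)
Lemma psiN a : psi (- a) = (psi a)^*.
Proof.
have inv_conj : (psi a)^-1 = (psi a)^* by rewrite invC_norm psi_unit expr1n invr1 mul1r.
by rewrite -inv_conj -[psi (- a)]mulr1 -(mulfV (psi_neq0 a)) mulrA -psiD addNr psi0 mul1r.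
Qed.

Lemma sum_psi_scale t : \sum_s psi (s * t) = (#|K| * (t == 0))%:R.
Proof.
have [-> | t_neq0] := eqVneq t 0.
  by under eq_bigr do rewrite mulr0 psi0; rewrite sumr_const muln1.
rewrite muln0; transitivity (\sum_s psi s).
  by rewrite [RHS](reindex_inj (mulIf t_neq0)).
apply: (sum_eq0_of_shift (addIr a0) psi_a0) => s; exact: psiD.
Qed.

Lemma sum_psi_dot d c (z : 'rV[K]_d) : c != 0 ->
  \sum_(x : 'rV[K]_d) psi (c * dot x z) = (#|K| ^ d * (z == 0))%:R.
Proof.
move=> c_neq0; have [-> | z_neq0] := eqVneq z 0.
  under eq_bigr do rewrite dotx0 mulr0 psi0.
  by rewrite sumr_const muln1 card_mx mul1n.
have [j zj_neq0] : exists j, z 0 j != 0.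
  apply/existsP; apply: contraR z_neq0 => /existsPn z0.
  by apply/eqP/rowP => j; rewrite mxE; exact/eqP/negbNE/z0.
pose u : 'rV[K]_d := \row_i (if i == j then a0 / (c * z 0 j) else 0).
have dot_u : c * dot u z = a0.
  rewrite /dot (bigD1 j) //= big1 => [|i ij]; last by rewrite mxE (negPf ij) mul0r.
  by rewrite mxE eqxx addr0; field; rewrite zj_neq0 c_neq0.
rewrite /= muln0; apply: (sum_eq0_of_shift (addIr u) psi_a0) => x.
by rewrite dotDl mulrDr psiD dot_u.
Qed.

Variable d : nat.
Hypothesis two_neq0 : (2 : K) != 0.

Lemma sum_sqr_twisted_transform (F : {set 'rV[K]_d}) (s c : K) : c != 0 ->
  \sum_(x : 'rV[K]_d) `|\sum_(y in F) psi (c * dot x y) * psi (s * sqnorm y)| ^+ 2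
  = (#|K| ^ d * #|F|)%:R.
Proof.
move=> c_neq0.
have expand x : `|\sum_(y in F) psi (c * dot x y) * psi (s * sqnorm y)| ^+ 2 =
    \sum_(y in F) \sum_(y' in F)
      psi (c * dot x (y - y')) * (psi (s * sqnorm y) * psi (- (s * sqnorm y'))).
  rewrite normCK rmorph_sum /= mulr_suml; apply: eq_bigr => y _.
  rewrite mulr_sumr; apply: eq_bigr => y' _.
  by rewrite rmorphM /= -!psiN -!psiD dotBr; congr psi; ring.
under eq_bigr do rewrite expand.
rewrite exchange_big /=; under eq_bigr => y yF.
  rewrite exchange_big /=.
  under eq_bigr do rewrite -mulr_suml sum_psi_dot //.
  rewrite /= (bigD1 y) //= big1 => [|y' /andP[_ y'_neq_y]]; last first.
    by rewrite subr_eq0 eq_sym (negPf y'_neq_y) muln0 mul0r.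
  rewrite subrr eqxx muln1 addr0 -psiD addrN psi0 mulr1.
  over.
by rewrite /= sumr_const natrM mulr_natr.
Qed.

(* For s <> 0, |sum_{x in E, y in F} psi(s ||x - y||)|^2 <= q^d |E||F|;
   this is where 2 <> 0 in K is used, to separate the cross term -2 s x.y. *)
Lemma quadratic_sum_bound (E F : {set 'rV[K]_d}) s : s != 0 ->
  `|\sum_(x in E) \sum_(y in F) psi (s * sqnorm (x - y))| ^+ 2
   <= (#|K| ^ d * #|E| * #|F|)%:R.
Proof.
move=> s_neq0; pose c := - (2 * s).
have c_neq0 : c != 0 by rewrite oppr_eq0 mulf_neq0.
pose w x := \sum_(y in F) psi (c * dot x y) * psi (s * sqnorm y).
have factor : \sum_(x in E) \sum_(y in F) psi (s * sqnorm (x - y)) =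
    \sum_(x in E) psi (s * sqnorm x) * w x.
  apply: eq_bigr => x _; rewrite mulr_sumr; apply: eq_bigr => y _.
  by rewrite -!psiD sqnormB /c; congr psi; ring.
rewrite factor; apply: le_trans (norm_sum_mul_sqr_le _ _ _) _.
under eq_bigr do rewrite psi_unit expr1n.
have sum_E_le : \sum_(x in E) `|w x| ^+ 2 <= \sum_x `|w x| ^+ 2.
  rewrite [X in _ <= X](bigID (mem E)) /= lerDl.
  by apply: sumr_ge0 => x _; apply: exprn_ge0.
rewrite /w sum_sqr_twisted_transform // in sum_E_le.
rewrite sumr_const -mulr_natl; apply: le_trans (ler_wpM2l (ler0n _ _) sum_E_le) _.
by rewrite mulr1 -natrM mulnCA mulnA.
Qed.

Lemma nu0_fourier_expansion (E F : {set 'rV[K]_d}) :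
  ((#|K| * nu0 E F)%:R : algC) = (#|E| * #|F|)%:R +
    \sum_(s | s != 0) \sum_(x in E) \sum_(y in F) psi (s * sqnorm (x - y)).
Proof.
transitivity (\sum_(x in E) \sum_(y in F) \sum_s psi (s * sqnorm (x - y))).
  rewrite natrM nu0_sum mulr_sumr; apply: eq_bigr => x _; rewrite mulr_sumr.
  by apply: eq_bigr => y _; rewrite sum_psi_scale natrM.
have split_zero (n : K) : \sum_s psi (s * n) = 1 + \sum_(s | s != 0) psi (s * n).
  by rewrite (bigD1 0) //= mul0r psi0.
under eq_bigr do under eq_bigr do rewrite split_zero.
under eq_bigr do rewrite big_split /=.
rewrite big_split /=; congr (_ + _).
  by rewrite sumr_const sumr_const -mulrnA mulnC.
by under eq_bigr do rewrite exchange_big /=; rewrite exchange_big.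
Qed.

Lemma nu0_deviation_sqr_bound (E F : {set 'rV[K]_d}) :
  ((#|K| * nu0 E F)%:Z - (#|E| * #|F|)%:Z) ^+ 2
    <= (#|K|.-1 ^ 2 * (#|K| ^ d * #|E| * #|F|))%:Z :> int.
Proof.
set dev := (_ - _)%R; set M : algC := (#|K| ^ d * #|E| * #|F|)%:R.
pose S s := \sum_(x in E) \sum_(y in F) psi (s * sqnorm (x - y)).
have dev_sum : (dev%:~R : algC) = \sum_(s | s != 0) S s.
  by rewrite /dev rmorphB /= -!pmulrn nu0_fourier_expansion addrAC subrr add0r.
have S_le s : s != 0 -> `|S s| <= sqrtC M.
  move=> s_neq0; rewrite -(sqrCK (normr_ge0 _)) ler_sqrtC ?nnegrE ?exprn_ge0 //.
  exact: quadratic_sum_bound.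
have dev_le : `|(dev%:~R : algC)| <= #|K|.-1%:R * sqrtC M.
  rewrite dev_sum; apply: le_trans (ler_norm_sum _ _ _) _.
  apply: le_trans (ler_sum _ S_le) _.
  by rewrite sumr_const -(cardC1 (0 : K)) mulr_natl.
have dev_sqr_le : `|(dev%:~R : algC)| ^+ 2 <= (#|K|.-1%:R * sqrtC M) ^+ 2.
  by rewrite lerXn2r ?nnegrE ?normr_ge0 ?mulr_ge0 ?ler0n ?sqrtC_ge0.
rewrite intr_normK ?rpred_int // exprMn sqrtCK -rmorphXn /= /M -natrX -natrM in dev_sqr_le.
by rewrite -(ler_int algC) -pmulrn.
Qed.

End AdditiveCharacter.

Lemma le_add_of_sqr_le (R : realDomainType) (a b c : R) :
  0 <= c -> (a - b) ^+ 2 <= c ^+ 2 -> a <= b + c.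
Proof.
move=> c_ge0 sqr_le; rewrite -lerBlDl; apply: le_trans (ler_norm _) _.
by rewrite -(ler_pXn2r (isT : (0 < 2)%N)) ?nnegrE ?normr_ge0 // real_normK ?num_real.
Qed.

Lemma natr_sqr_even_power (R : rcfType) (q d e f : nat) : ~~ odd d ->
  ((q ^ d * e * f)%:R : R) = ((q ^ d./2)%:R * Num.sqrt e%:R * Num.sqrt f%:R) ^+ 2.
Proof.
move=> d_even; rewrite !exprMn !sqr_sqrtr ?ler0n // -natrX -!natrM -expnM.
by rewrite -[d in (q ^ d)%N](odd_double_half d) (negPf d_even) add0n muln2.
Qed.

Theorem mainTheorem9 (K : finFieldType) (hK : 2%N \notin [pchar K])
    (d : nat) (hd2 : (2 <= d)%N) (hdeven : ~~ odd d)
    (E F : {set 'rV[K]_d}) (R : rcfType) :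
  (nu0 E F)%:R <= (#|K|%:R)^-1 * #|E|%:R * #|F|%:R
                  + 2 * (#|K| ^ d./2)%:R * Num.sqrt (#|E|%:R : R) * Num.sqrt (#|F|%:R : R).
Proof.
have two_neq0 : (2 : K) != 0 by apply: contra hK => /eqP two0; rewrite inE two0 eqxx.
have [psi [psiD psi_unit [a0 psi_a0]]] := finField_nontrivial_character K.
have := nu0_deviation_sqr_bound psiD psi_unit psi_a0 two_neq0 E F.
rewrite -(ler_int R) rmorphXn /= rmorphB /= -!pmulrn (natrM _ (#|K|.-1 ^ 2)) natr_sqr_even_power //.
set q := #|K|; set P := (_ * _ * _ : R) => dev_sqr_le.
have P_ge0 : 0 <= P by rewrite !mulr_ge0 ?ler0n ?sqrtr_ge0.
have q_pos : (0 : R) < q%:R by rewrite ltr0n; apply/card_gt0P; exists 0.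
have dev_le : (q * nu0 E F)%:R <= (#|E| * #|F|)%:R + q%:R * P :> R.
  rewrite natrX -exprMn in dev_sqr_le; apply: le_trans (le_add_of_sqr_le _ dev_sqr_le) _.
    by rewrite mulr_ge0 ?ler0n.
  by rewrite lerD2l ler_wpM2r // ler_nat leq_pred.
have -> : 2 * (q ^ d./2)%:R * Num.sqrt (#|E|%:R : R) * Num.sqrt #|F|%:R = 2 * P.
  by rewrite /P !mulrA.
have nu0_le : (nu0 E F)%:R <= q%:R^-1 * #|E|%:R * #|F|%:R + P :> R.
  rewrite -(ler_pM2l q_pos) mulrDr !mulrA mulfV ?gt_eqF // mul1r.
  by move: dev_le; rewrite /P !mulrA !natrM.
by apply: le_trans nu0_le _; rewrite lerD2l; lra.
Qed.
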